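(* Let $n\ge 1$ and $m\ge 2$ both be odd. Then $L_m(n)=0$.
   Context: The Ducci function $D:\mathbb{Z}_m^n\to\mathbb{Z}_m^n$ is $D(x_1,\dots,x_n)=(x_1+x_2,\,x_2+x_3,\,\dots,\,x_{n-1}+x_n,\,x_n+x_1)$, entries mod $m$. For $\mathbf{u}\in\mathbb{Z}_m^n$, $\mathrm{Len}(\mathbf{u})$ is the smallest $l\ge 0$ such that $D^{l+k}(\mathbf{u})=D^l(\mathbf{u})$ for some $k\ge 1$. $L_m(n)=\mathrm{Len}(0,0,\dots,0,1)$. *)

From mathcomp Require Import all_boot all_algebra.
From Stdlib Require Import ClassicalEpsilon.
Set Implicit Arguments. Unset Strict Implicit. Unset Printing Implicit Defensive.
Import GRing.Theory.

(* Vectors in Z_m^n, as finite functions 'I_n -> 'Z_m (meaningful for m >= 2;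
   index i : 'I_n stands for x_{i+1}). *)
Definition vec (m n : nat) := {ffun 'I_n -> 'Z_m}.

Definition ducci (m n : nat) (x : vec m n) : vec m n :=
  [ffun i => (x i + x (ordS i))%R].

Definition eventually_periodic_from (m n : nat) (u : vec m n) (l : nat) : Prop :=
  exists k, 0 < k /\ iter (l + k) (@ducci m n) u = iter l (@ducci m n) u.

Definition epfb (m n : nat) (u : vec m n) (l : nat) : bool :=
  if excluded_middle_informative (eventually_periodic_from u l) then true else false.

Lemma epfbP m n (u : vec m n) l : reflect (eventually_periodic_from u l) (epfb u l).
Proof.
rewrite /epfb; case: excluded_middle_informative => H; [by left | by right].
Qed.

Lemma Len_exists (m n : nat) (u : vec m n) : exists l, epfb u l.
Proof.
pose f := fun i : 'I_(#|vec m n|).+1 => iter i (@ducci m n) u.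
have : ~~ injectiveb f.
  apply/injectiveP => inj.
  have H := @leq_card _ _ f inj.
  rewrite card_ord in H.
  exact: (elimF idP (ltnn #|vec m n|) H).
case/dinjectivePn => i _ [j]; rewrite !inE => /andP [ji _] eqf.
have [lt|ge] := ltnP i j.
- exists i; apply/epfbP; exists (j - i); split; first by rewrite subn_gt0; assumption.
  rewrite (subnKC (ltnW lt)); symmetry; exact: eqf.
- have gt' : j < i by rewrite ltn_neqAle ji ge.
  exists j; apply/epfbP; exists (i - j); split; first by rewrite subn_gt0; assumption.
  rewrite (subnKC (ltnW gt')); exact: eqf.
Qed.

Definition Len (m n : nat) (u : vec m n) : nat := ex_minn (Len_exists u).

Definition e_last (m n : nat) : vec m n :=
  [ffun i : 'I_n => if val i == n.-1 then 1%R else 0%R].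

Definition L (m n : nat) : nat := Len (e_last m n).

From mathcomp Require Import all_boot all_algebra.
Import GRing.Theory.

(* For odd m and n the Ducci map is injective on the finite set Z_m^n, hence a
   permutation, so every vector lies on a cycle and has length 0.  Injectivity
   is linear algebra: a kernel vector satisfies x_(i+1) = -x_i around a cycle
   of odd length n, so going once around gives x_i = -x_i, and 2 is invertible
   modulo the odd number m. *)

Lemma val_iter_ordS n (i : 'I_n) k : iter k (@ordS n) i = (i + k) %% n :> nat.
Proof.
elim: k => [|k IHk] /=; first by rewrite addn0 modn_small.
by rewrite IHk -addn1 modnDml addn1 addnS.
Qed.

Lemma iter_ordS_id n (i : 'I_n) : iter n (@ordS n) i = i.
Proof. by apply: ord_inj; rewrite val_iter_ordS modnDr modn_small. Qed.

Section OddCycle.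

Local Open Scope ring_scope.

Variables (V : zmodType) (n : nat) (d : 'I_n -> V).
Hypothesis d_antiperiodic : forall i, d (ordS i) = - d i.

Lemma antiperiodic_iter k i : d (iter k (@ordS n) i) = if odd k then - d i else d i.
Proof.
elim: k => [|k IHk] //=; rewrite d_antiperiodic IHk.
by case: (odd k); rewrite ?opprK.
Qed.

Lemma antiperiodic_odd_cycle_eq0 :
  (forall x : V, x *+ 2 = 0 -> x = 0) -> odd n -> forall i, d i = 0.
Proof.
move=> double_inj odd_n i; apply: double_inj.
have := antiperiodic_iter n i; rewrite iter_ordS_id odd_n mulr2n => {1}->.
exact: addNr.
Qed.

End OddCycle.

(* [1 < m] is needed: ['Z_1] is Z/2Z, where doubling is zero. *)
Lemma Zp_double_eq0 m (x : 'Z_m) : 1 < m -> odd m -> (x *+ 2 = 0 -> x = 0)%R.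
Proof.
move=> m_gt1 odd_m x2_eq0.
have unit2 : (2%:R : 'Z_m)%R \is a GRing.unit by rewrite unitZpE // coprimen2.
by apply: (mulIr unit2); rewrite mul0r mulr_natr x2_eq0.
Qed.

Lemma ducci_inj m n : 1 < m -> odd m -> odd n -> injective (@ducci m n).
Proof.
move=> m_gt1 odd_m odd_n x y /ffunP eq_xy; apply/ffunP => i.
apply: subr0_eq; move: i.
apply: (@antiperiodic_odd_cycle_eq0 _ _ (fun i => x i - y i)%R) => //.
- move=> i; have := eq_xy i; rewrite !ffunE => sum_eq.
  apply/eqP; rewrite opprB subr_eq addrAC eq_sym subr_eq.
  by rewrite [X in _ == X]addrC sum_eq.
- by move=> z; apply: Zp_double_eq0.
Qed.

Lemma injective_eventually_periodic_from0 m n (u : vec m n) :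
  injective (@ducci m n) -> eventually_periodic_from u 0.
Proof.
move=> inj_ducci; exists (order (@ducci m n) u).
by split; [exact: order_gt0 | exact: iter_order].
Qed.

Lemma Len_eq0 m n (u : vec m n) : eventually_periodic_from u 0 -> Len u = 0.
Proof.
move/epfbP=> per0; rewrite /Len; case: ex_minnP => l _ /(_ 0 per0).
by rewrite leqn0 => /eqP.
Qed.

Theorem theorem2p2 (m n : nat) :
  1 <= n -> odd n -> 2 <= m -> odd m -> L m n = 0.
Proof.
move=> _ odd_n m_gt1 odd_m.
by apply/Len_eq0/injective_eventually_periodic_from0/ducci_inj.
Qed.
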